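(* Let $G$ be a graph and let $\mathbf{K}=(K,\mathbf{a},\mathbf{b})\in\mathscr{G}(k,l)$, $\mathbf{H}=(H,\mathbf{a}',\mathbf{b}')\in\mathscr{G}(k',l')$. Then: (1) $\hat T^G_{\mathbf{K}}\otimes\hat T^G_{\mathbf{H}}=\sum_f\hat T^G_{\mathbf{K}\cup_f\mathbf{H}}$, where the sum runs over all vertex overlaps $f$ of $K$ and $H$; (2) if $k'=l$, then $\hat T^G_{\mathbf{H}}\hat T^G_{\mathbf{K}}=\sum_f\hat T^G_{\mathbf{H}\cdot_f\mathbf{K}}$, where the sum runs over all vertex overlaps $f$ of $K$ and $H$ with $(b_i,a'_i)\in f$ for all $i$; in particular $\hat T^G_{\mathbf{H}}\hat T^G_{\mathbf{K}}=0$ if $\ker\mathbf{b}\ne\ker\mathbf{a}'$; (3) $(\hat T^G_{\mathbf{K}})^*=\hat T^G_{\mathbf{K}^*}$.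
   Context: Graphs are finite, undirected, without multiple edges, loops allowed; graph homomorphisms map edges (including loops) to edges. A bilabelled graph $(K,\mathbf{a},\mathbf{b})\in\mathscr{G}(k,l)$ consists of a graph $K$ and tuples $\mathbf{a}\in V(K)^k$, $\mathbf{b}\in V(K)^l$ (up to isomorphism); its involution is $(K,\mathbf{b},\mathbf{a})$. A vertex overlap of $K,H$ is a subset $f\subset V(K)\times V(H)$ in which each vertex occurs at most once; $K\cup_fH$ is the quotient of $K\sqcup H$ identifying $v$ with $w$ for $(v,w)\in f$ (edges between vertices of the quotient iff between some representatives), with induced maps $f_K,f_H$. Then $\mathbf{K}\cup_f\mathbf{H}:=(K\cup_fH,f_K(\mathbf{a})f_H(\mathbf{a}'),f_K(\mathbf{b})f_H(\mathbf{b}'))$ (concatenated tuples), and, if $(b_i,a'_i)\in f$ for all $i$, $\mathbf{H}\cdot_f\mathbf{K}:=(K\cup_fH,f_K(\mathbf{a}),f_H(\mathbf{b}'))$. $\ker\mathbf{b}$ is the partition of positions of $\mathbf{b}$ by equal entries. With the vertices of $G$ labelled $1,\dots,n$, $\hat T^G_{\mathbf{K}}\colon(\mathbb{C}^n)^{\otimes k}\to(\mathbb{C}^n)^{\otimes l}$ has entries $[\hat T^G_{\mathbf{K}}]_{\mathbf{j}\mathbf{i}}=\#\{\phi\colon K\to G\text{ injective homomorphism}\mid\phi(\mathbf{a})=\mathbf{i},\phi(\mathbf{b})=\mathbf{j}\}$ (coefficient of $e_{j_1}\otimes\cdots\otimes e_{j_l}$ in the image of $e_{i_1}\otimes\cdots\otimes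 e_{i_k}$). *)

From HB Require Import structures.
From mathcomp Require Import all_boot all_order all_algebra all_field.
Set Implicit Arguments. Unset Strict Implicit. Unset Printing Implicit Defensive.
Import Order.TTheory GRing.Theory Num.Theory.
Local Open Scope ring_scope.

(* Graphs: a finite vertex type V with an edge relation E : rel V, assumed
   symmetric (undirected); loops (E v v) are allowed; no multi-edges.
   A bilabelled graph (K,a,b) in G(k,l): a graph (VK,EK) with
   a : {ffun 'I_k -> VK}, b : {ffun 'I_l -> VK} (tuples as finite functions). *)

Definition is_hom (V W : finType) (E : rel V) (F : rel W) (phi : {ffun V -> W}) : bool :=
  [forall u, forall v, E u v ==> F (phi u) (phi v)].

(* An "operator" (C^V)^{(x)k} -> (C^V)^{(x)l}, given by its entries:
   op j i = coefficient of e_{j_1}(x)..(x)e_{j_l} in the image of e_{i_1}(x)..(x)e_{i_k}. *)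
Definition op (V : finType) (k l : nat) := {ffun 'I_l -> V} -> {ffun 'I_k -> V} -> algC.

Definition Thom (VG : finType) (EG : rel VG) (VK : finType) (EK : rel VK)
  (k l : nat) (a : {ffun 'I_k -> VK}) (b : {ffun 'I_l -> VK}) : op VG k l :=
  fun j i => (#|[set phi : {ffun VK -> VG} | [&& injectiveb phi, is_hom EK EG phi,
        [ffun x => phi (a x)] == i & [ffun x => phi (b x)] == j]]|)%:R.

(* Tensor product, using the identification of (C^n)^{(x)l}(x)(C^n)^{(x)l'}
   with (C^n)^{(x)(l+l')} via concatenation of index tuples. *)
Definition tensorop (V : finType) (k l k' l' : nat) (A : op V k l) (B : op V k' l') :
  op V (k + k') (l + l') :=
  fun J I => A [ffun x => J (lshift l' x)] [ffun x => I (lshift k' x)]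
           * B [ffun x => J (rshift l x)] [ffun x => I (rshift k x)].

Definition compop (V : finType) (k l m : nat) (B : op V l m) (A : op V k l) : op V k m :=
  fun j i => \sum_(t : {ffun 'I_l -> V}) B j t * A t i.

Definition adjop (V : finType) (k l : nat) (A : op V k l) : op V l k :=
  fun i j => (A j i)^*.

Section Overlap.
Variables (VK VH : finType) (EK : rel VK) (EH : rel VH).

Definition overlap (f : {set VK * VH}) : bool :=
  [forall p in f, forall q in f, ((p.1 == q.1) || (p.2 == q.2)) ==> (p == q)].

Definition ovl_eqv (f : {set VK * VH}) (x y : VK + VH) : bool :=
  (x == y) ||
  match x, y with
  | inl v, inr w => (v, w) \in f
  | inr w, inl v => (v, w) \in f
  | _, _ => false
  end.

Definition ovl_class (f : {set VK * VH}) (x : VK + VH) : {set VK + VH} :=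
  [set y | ovl_eqv f x y].

Definition is_ovl_class (f : {set VK * VH}) (C : {set VK + VH}) : bool :=
  [exists x, C == ovl_class f x].

(* vertex set of K \cup_f H : the equivalence classes *)
Definition Qv (f : {set VK * VH}) : finType := {C : {set VK + VH} | is_ovl_class f C}.

Lemma ovl_class_ok (f : {set VK * VH}) (x : VK + VH) : is_ovl_class f (ovl_class f x).
Proof. by apply/existsP; exists x. Qed.

Definition qproj (f : {set VK * VH}) (x : VK + VH) : Qv f :=
  exist _ (ovl_class f x) (ovl_class_ok f x).

Definition fK (f : {set VK * VH}) (v : VK) : Qv f := qproj f (inl v).
Definition fH (f : {set VK * VH}) (w : VH) : Qv f := qproj f (inr w).

Definition sumE (x y : VK + VH) : bool :=
  match x, y with
  | inl v, inl v' => EK v v'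
  | inr w, inr w' => EH w w'
  | _, _ => false
  end.

Definition unionE (f : {set VK * VH}) : rel (Qv f) :=
  fun q q' => [exists x, exists y, [&& qproj f x == q, qproj f y == q' & sumE x y]].

Definition unionL (f : {set VK * VH}) (m m' : nat)
  (c : {ffun 'I_m -> VK}) (c' : {ffun 'I_m' -> VH}) : {ffun 'I_(m + m') -> Qv f} :=
  [ffun i => match split i with
             | inl i1 => fK f (c i1)
             | inr i2 => fH f (c' i2)
             end].

End Overlap.

Definition kerT (V : finType) (l : nat) (b : {ffun 'I_l -> V}) : {set {set 'I_l}} :=
  [set [set j | b j == b i] | i : 'I_l].

Definition castT (V : finType) (m m' : nat) (e : m = m') (c : {ffun 'I_m -> V}) :
  {ffun 'I_m' -> V} := [ffun i => c (cast_ord (esym e) i)].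

Arguments qproj {VK VH} f x.
Arguments fK {VK VH} f v.
Arguments fH {VK VH} f w.
Arguments unionL {VK VH} f {m m'} c c'.
Arguments unionE {VK VH} EK EH f _ _.

From HB Require Import structures.
From mathcomp Require Import all_boot all_order all_algebra all_field.
Set Implicit Arguments. Unset Strict Implicit. Unset Printing Implicit Defensive.
Import Order.TTheory GRing.Theory Num.Theory.
Local Open Scope ring_scope.

(* A pair (phi, psi) of injective homomorphisms K -> G and H -> G determines
   the vertex overlap f = {(v, w) | phi v = psi w}, and the pairs with a given
   overlap f are exactly the restrictions of the injective homomorphisms
   K \cup_f H -> G along f_K and f_H.  Hence counting pairs (an entry of the
   tensor product, or a term of the matrix product) splits as a sum over f of
   entries of T_{K \cup_f H}.  In the product, the pairs must also satisfy
   phi(b) = psi(a'), i.e. (b_i, a'_i) \in f; injectivity then forces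
   ker b = ker a'.  The adjoint swaps the labels, as all entries are natural
   numbers. *)

Lemma eq_ffun_lrshift (T : eqType) m m' (L L' : {ffun 'I_(m + m') -> T}) :
  (L == L') = ([ffun x => L (lshift m' x)] == [ffun x => L' (lshift m' x)])
              && ([ffun x => L (rshift m x)] == [ffun x => L' (rshift m x)]).
Proof.
apply/eqP/andP => [-> // | [/eqP/ffunP E1 /eqP/ffunP E2]].
apply/ffunP => i; rewrite -(splitK i); case: (split i) => x /=.
- by have := E1 x; rewrite !ffunE.
- by have := E2 x; rewrite !ffunE.
Qed.

Section HomPairs.
Variables (VG VK VH : finType) (EG : rel VG) (EK : rel VK) (EH : rel VH).

Local Notation hom_pair := ({ffun VK -> VG} * {ffun VH -> VG})%type.

Definition coincidence (p : hom_pair) : {set VK * VH} :=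
  [set vw | p.1 vw.1 == p.2 vw.2].

Definition inj_hom_pair (p : hom_pair) : bool :=
  [&& injectiveb p.1, is_hom EK EG p.1, injectiveb p.2 & is_hom EH EG p.2].

Definition sum_map (p : hom_pair) (x : VK + VH) : VG :=
  match x with inl v => p.1 v | inr w => p.2 w end.

Lemma overlap_eq (f : {set VK * VH}) : overlap f ->
  forall p q, p \in f -> q \in f -> (p.1 == q.1) || (p.2 == q.2) -> p = q.
Proof.
move=> /forallP ovf p q pf qf e.
by move: (ovf p); rewrite pf => /forallP/(_ q); rewrite qf e => /eqP.
Qed.

Lemma overlap_coincidence p : inj_hom_pair p -> overlap (coincidence p).
Proof.
case/and4P => /injectiveP inj1 _ /injectiveP inj2 _.
apply/forallP => -[v w]; apply/implyP; rewrite inE /= => /eqP E1.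
apply/forallP => -[v' w']; apply/implyP; rewrite inE /= => /eqP E2.
apply/implyP => /orP[/eqP eqv | /eqP eqw]; subst.
- by rewrite (inj2 _ _ (etrans (esym E1) E2)).
- by rewrite (inj1 _ _ (etrans E1 (esym E2))).
Qed.

Lemma card_inj_hom_pairs (P : pred hom_pair) :
  #|[set p | inj_hom_pair p && P p]|
  = (\sum_(f : {set VK * VH} | overlap f)
       #|[set p | [&& inj_hom_pair p, coincidence p == f & P p]]|)%N.
Proof.
rewrite -sum1_card (partition_big coincidence (fun f => overlap f)); last first.
  by move=> p; rewrite inE => /andP[/overlap_coincidence].
apply: eq_bigr => f _; rewrite -sum1_card; apply: eq_bigl => p.
by rewrite !inE -andbA [P p && _]andbC.
Qed.

Section Quotient.
Variable f : {set VK * VH}.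
Hypothesis ovf : overlap f.

Lemma ovl_eqv_refl x : ovl_eqv f x x.
Proof. by rewrite /ovl_eqv eqxx. Qed.

Lemma ovl_eqv_sym x y : ovl_eqv f x y = ovl_eqv f y x.
Proof. by rewrite /ovl_eqv eq_sym; case: x; case: y. Qed.

Lemma ovl_eqv_trans x y z : ovl_eqv f x y -> ovl_eqv f y z -> ovl_eqv f x z.
Proof.
have uniq_f := overlap_eq ovf; rewrite /ovl_eqv.
case: x => [v|w]; case: y => [v1|w1]; case: z => [v2|w2] /=; rewrite ?orbF.
- by move=> /eqP[->].
- by move=> /eqP[->].
- move=> h1 h2; have := uniq_f _ _ h1 h2.
  by rewrite /= eqxx orbT => /(_ isT) [->].
- by move=> h /eqP[<-].
- by move=> h /eqP[<-].
- move=> h1 h2; have := uniq_f _ _ h1 h2.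
  by rewrite /= eqxx => /(_ isT) [->].
- by move=> /eqP[->].
- by move=> /eqP[->].
Qed.

Lemma qproj_eq x y : (qproj f x == qproj f y) = ovl_eqv f x y.
Proof.
apply/eqP/idP => [/(congr1 val) /= E | exy].
  have : y \in ovl_class f y by rewrite inE ovl_eqv_refl.
  by rewrite -E inE.
apply: val_inj; apply/setP => z; rewrite !inE.
by apply/idP/idP; apply: ovl_eqv_trans; rewrite // ovl_eqv_sym.
Qed.

Definition qrepr (C : Qv f) : VK + VH := xchoose (existsP (valP C)).

Lemma qreprK C : qproj f (qrepr C) = C.
Proof. by apply: val_inj; rewrite /= (eqP (xchooseP (existsP (valP C)))). Qed.

Definition restr (phi : {ffun Qv f -> VG}) : hom_pair :=
  ([ffun v => phi (fK f v)], [ffun w => phi (fH f w)]).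

Definition glue (p : hom_pair) : {ffun Qv f -> VG} := [ffun C => sum_map p (qrepr C)].

Lemma sum_map_restr phi x : sum_map (restr phi) x = phi (qproj f x).
Proof. by case: x => ? /=; rewrite ffunE. Qed.

Lemma restr_inj : injective restr.
Proof.
move=> phi psi E; apply/ffunP => C; rewrite -(qreprK C).
by rewrite -!sum_map_restr E.
Qed.

(* The lifts to K + H of the injective homomorphisms K \cup_f H -> G. *)
Definition union_compatible (g : VK + VH -> VG) : Prop :=
  (forall x y, (g x == g y) = ovl_eqv f x y) /\
  (forall x y, sumE EK EH x y -> EG (g x) (g y)).

Lemma inj_hom_union_compatible (phi : {ffun Qv f -> VG}) :
  injectiveb phi && is_hom (unionE EK EH f) EG phi
  <-> union_compatible (sum_map (restr phi)).
Proof.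
split=> [/andP[/injectiveP inj_phi /forallP hom_phi] | [eqv_g hom_g]].
  split=> x y; rewrite !sum_map_restr.
    by rewrite (inj_eq inj_phi) qproj_eq.
  move=> Exy; move/forallP/(_ (qproj f y))/implyP: (hom_phi (qproj f x)); apply.
  by apply/existsP; exists x; apply/existsP; exists y; rewrite !eqxx.
apply/andP; split.
  apply/injectiveP => C C'; rewrite -(qreprK C) -(qreprK C') => /eqP.
  by rewrite -!sum_map_restr eqv_g -qproj_eq => /eqP.
apply/forallP => q; apply/forallP => q'; apply/implyP.
case/existsP => x /existsP[y /and3P[/eqP <- /eqP <- Exy]].
by rewrite -!sum_map_restr; apply: hom_g.
Qed.

Lemma inj_hom_pair_compatible p :
  inj_hom_pair p && (coincidence p == f) <-> union_compatible (sum_map p).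
Proof.
split=> [/andP[/and4P[/injectiveP inj1 /forallP hom1 /injectiveP inj2 /forallP hom2]
                 /eqP pf] | [eqv_p hom_p]].
  rewrite /union_compatible -pf; split=> [x y | [u|u] [v|v] //= Euv].
  - rewrite /ovl_eqv; case: x => [v|w]; case: y => [v1|w1] /=;
      by rewrite ?orbF ?inE ?(inj_eq inj1) ?(inj_eq inj2) // eq_sym.
  - by move/forallP/(_ v)/implyP: (hom1 u); apply.
  - by move/forallP/(_ v)/implyP: (hom2 u); apply.
apply/andP; split; [apply/and4P; split|].
- apply/injectiveP => v v' /eqP.
  by rewrite [_ == _](eqv_p (inl v) (inl v')) /ovl_eqv orbF => /eqP[].
- apply/forallP => u; apply/forallP => v; apply/implyP => Euv.
  exact: (hom_p (inl u) (inl v)).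
- apply/injectiveP => w w' /eqP.
  by rewrite [_ == _](eqv_p (inr w) (inr w')) /ovl_eqv orbF => /eqP[].
- apply/forallP => u; apply/forallP => v; apply/implyP => Euv.
  exact: (hom_p (inr u) (inr v)).
- by apply/eqP/setP => -[v w]; rewrite inE; exact: (eqv_p (inl v) (inr w)).
Qed.

Lemma restr_glue p : union_compatible (sum_map p) -> restr (glue p) = p.
Proof.
case=> eqv_p _; have glueE x : glue p (qproj f x) = sum_map p x.
  by rewrite ffunE; apply/eqP; rewrite eqv_p -qproj_eq qreprK.
rewrite [RHS]surjective_pairing.
by congr pair; apply/ffunP => v; rewrite ffunE; [exact: (glueE (inl v)) | exact: (glueE (inr v))].
Qed.

Lemma card_inj_hom_union (P : pred hom_pair) :
  #|[set phi : {ffun Qv f -> VG} |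
      [&& injectiveb phi, is_hom (unionE EK EH f) EG phi & P (restr phi)]]|
  = #|[set p | [&& inj_hom_pair p, coincidence p == f & P p]]|.
Proof.
rewrite -(card_in_imset (in2W restr_inj)); apply: eq_card => p.
rewrite [in RHS]inE andbA; apply/imsetP/andP => [[phi] | [/inj_hom_pair_compatible p_ok Pp]].
  rewrite inE andbA => /andP[/inj_hom_union_compatible phi_ok Pphi] ->.
  by split=> //; apply/inj_hom_pair_compatible.
exists (glue p); last by rewrite restr_glue.
by rewrite inE andbA restr_glue // Pp andbT; apply/inj_hom_union_compatible; rewrite restr_glue.
Qed.

Lemma Thom_union_card m1 m2 (A : {ffun 'I_m1 -> Qv f}) (B : {ffun 'I_m2 -> Qv f})
    (j : {ffun 'I_m2 -> VG}) (i : {ffun 'I_m1 -> VG}) (P : pred hom_pair) :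
  (forall phi : {ffun Qv f -> VG}, injectiveb phi -> is_hom (unionE EK EH f) EG phi ->
     ([ffun x => phi (A x)] == i) && ([ffun x => phi (B x)] == j) = P (restr phi)) ->
  Thom EG (unionE EK EH f) A B j i
  = #|[set p | [&& inj_hom_pair p, coincidence p == f & P p]]|%:R.
Proof.
move=> labelsE; rewrite /Thom -card_inj_hom_union; congr _%:R; apply: eq_card => phi.
by rewrite !inE; apply/and3P/and3P => -[inj_phi hom_phi]; rewrite labelsE.
Qed.

Lemma unionL_restrE m m' (c : {ffun 'I_m -> VK}) (c' : {ffun 'I_m' -> VH})
    (phi : {ffun Qv f -> VG}) (L : {ffun 'I_(m + m') -> VG}) :
  ([ffun x => phi (unionL f c c' x)] == L)
  = ([ffun x => (restr phi).1 (c x)] == [ffun x => L (lshift m' x)])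
    && ([ffun x => (restr phi).2 (c' x)] == [ffun x => L (rshift m x)]).
Proof.
rewrite eq_ffun_lrshift; congr (_ && _); congr (_ == _); apply/ffunP => x; rewrite !ffunE.
- by have /= -> := unsplitK (inl x : 'I_m + 'I_m').
- by have /= -> := unsplitK (inr x : 'I_m + 'I_m').
Qed.

End Quotient.

Lemma coincidence_labelsE m (c : {ffun 'I_m -> VK}) (c' : {ffun 'I_m -> VH}) (p : hom_pair) :
  ([ffun x => p.2 (c' x)] == [ffun x => p.1 (c x)])
  = [forall x, (c x, c' x) \in coincidence p].
Proof.
apply/eqP/forallP => [/ffunP E x | E].
  by move: (E x); rewrite inE !ffunE eq_sym => ->.
by apply/ffunP => x; move: (E x); rewrite inE !ffunE eq_sym => /eqP.
Qed.

Lemma compop_Thom_card k l m (a : {ffun 'I_k -> VK}) (b : {ffun 'I_l -> VK})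
    (a2 : {ffun 'I_l -> VH}) (b' : {ffun 'I_m -> VH}) j i :
  compop (Thom EG EH a2 b') (Thom EG EK a b) j i
  = #|[set p | inj_hom_pair p && [&& [ffun x => p.1 (a x)] == i,
        [ffun x => p.2 (b' x)] == j & [ffun x => p.2 (a2 x)] == [ffun x => p.1 (b x)]]]|%:R.
Proof.
rewrite /compop /Thom; under eq_bigr do rewrite -natrM; rewrite -natr_sum; congr _%:R.
rewrite -sum1_card (partition_big (fun p : hom_pair => [ffun x => p.1 (b x)]) predT) //.
apply: eq_bigr => t _; rewrite mulnC -cardsX -sum1_card; apply: eq_bigl => p.
rewrite !inE; case: (eqVneq [ffun x => p.1 (b x)] t) => [<- | /negbTE neq_t].
  by rewrite /inj_hom_pair !andbT -!andbA; do !bool_congr.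
by rewrite !andbF.
Qed.

Lemma kerT_comp_inj (T T' : finType) n (g : T -> T') (c : {ffun 'I_n -> T}) :
  injective g -> kerT [ffun x => g (c x)] = kerT c.
Proof.
move=> inj_g; apply: eq_imset => x; apply/setP => y.
by rewrite !inE !ffunE (inj_eq inj_g).
Qed.

Lemma Thom_tensor k l k' l' (a : {ffun 'I_k -> VK}) (b : {ffun 'I_l -> VK})
    (a' : {ffun 'I_k' -> VH}) (b' : {ffun 'I_l' -> VH}) J I :
  tensorop (Thom EG EK a b) (Thom EG EH a' b') J I
  = \sum_(f : {set VK * VH} | overlap f)
      Thom EG (unionE EK EH f) (unionL f a a') (unionL f b b') J I.
Proof.
pose labels (p : hom_pair) :=
  [&& [ffun x => p.1 (a x)] == [ffun x => I (lshift k' x)],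
      [ffun x => p.2 (a' x)] == [ffun x => I (rshift k x)],
      [ffun x => p.1 (b x)] == [ffun x => J (lshift l' x)] &
      [ffun x => p.2 (b' x)] == [ffun x => J (rshift l x)]].
rewrite (eq_bigr (fun f => #|[set p | [&& inj_hom_pair p, coincidence p == f & labels p]]|%:R)).
  rewrite -natr_sum -card_inj_hom_pairs /tensorop /Thom -natrM -cardsX.
  congr _%:R; apply: eq_card => p.
  by rewrite !inE /inj_hom_pair /labels -!andbA; do !bool_congr.
move=> f ovf; apply: Thom_union_card => // phi _ _.
by rewrite !unionL_restrE -!andbA; do !bool_congr.
Qed.

Lemma Thom_comp k l m (a : {ffun 'I_k -> VK}) (b : {ffun 'I_l -> VK})
    (a2 : {ffun 'I_l -> VH}) (b' : {ffun 'I_m -> VH}) j i :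
  compop (Thom EG EH a2 b') (Thom EG EK a b) j i
  = \sum_(f : {set VK * VH} | overlap f && [forall x, (b x, a2 x) \in f])
      Thom EG (unionE EK EH f) [ffun x => fK f (a x)] [ffun x => fH f (b' x)] j i.
Proof.
rewrite compop_Thom_card card_inj_hom_pairs natr_sum big_mkcondr /=.
apply: eq_bigr => f ovf.
pose labels (p : hom_pair) := ([ffun x => p.1 (a x)] == i) && ([ffun x => p.2 (b' x)] == j).
set glued := [forall x, (b x, a2 x) \in f].
have -> : #|[set p | [&& inj_hom_pair p, coincidence p == f &
            [&& [ffun x => p.1 (a x)] == i, [ffun x => p.2 (b' x)] == j &
                [ffun x => p.2 (a2 x)] == [ffun x => p.1 (b x)]]]]|
        = #|[set p | [&& inj_hom_pair p, coincidence p == f & labels p && glued]]|.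
  apply: eq_card => p; rewrite !inE coincidence_labelsE -!andbA.
  by case: (coincidence p =P f) => [-> | ]; rewrite ?andbF.
case: ifP => _; last by rewrite eq_card0 // => p; rewrite !inE !andbF.
rewrite (@Thom_union_card f ovf _ _ _ _ _ _ labels) => [|phi _ _].
  by congr _%:R; apply: eq_card => p; rewrite !inE andbT.
by rewrite /labels /=; congr (_ && _); congr (_ == _); apply: eq_ffun => x; rewrite !ffunE.
Qed.

Lemma Thom_comp_ker k l m (a : {ffun 'I_k -> VK}) (b : {ffun 'I_l -> VK})
    (a2 : {ffun 'I_l -> VH}) (b' : {ffun 'I_m -> VH}) j i :
  kerT b != kerT a2 -> compop (Thom EG EH a2 b') (Thom EG EK a b) j i = 0.
Proof.
move=> ker_neq; rewrite compop_Thom_card; apply/eqP; rewrite pnatr_eq0 cards_eq0.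
apply/eqP/setP => p; rewrite !inE; apply: contraNF ker_neq.
case/andP => /and4P[/injectiveP inj1 _ /injectiveP inj2 _] /and3P[_ _ /eqP glued].
by rewrite -(kerT_comp_inj _ inj1) -(kerT_comp_inj _ inj2) glued.
Qed.

End HomPairs.

Lemma Thom_adj (VG VK : finType) (EG : rel VG) (EK : rel VK) k l
    (a : {ffun 'I_k -> VK}) (b : {ffun 'I_l -> VK}) i j :
  adjop (Thom EG EK a b) i j = Thom EG EK b a i j.
Proof.
rewrite /adjop /Thom conjC_nat; congr _%:R; apply: eq_card => phi.
by rewrite !inE; congr [&& _, _ & _]; apply: andbC.
Qed.

Unset Implicit Arguments.

Theorem proposition4p5
  (VG : finType) (EG : rel VG) (symG : symmetric EG)
  (VK : finType) (EK : rel VK) (symK : symmetric EK)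
  (k l : nat) (a : {ffun 'I_k -> VK}) (b : {ffun 'I_l -> VK})
  (VH : finType) (EH : rel VH) (symH : symmetric EH)
  (k' l' : nat) (a' : {ffun 'I_k' -> VH}) (b' : {ffun 'I_l' -> VH}) :
  (* (1) *)
  (forall (J : {ffun 'I_(l + l') -> VG}) (I : {ffun 'I_(k + k') -> VG}),
     tensorop (Thom EG EK a b) (Thom EG EH a' b') J I
     = \sum_(f : {set VK * VH} | overlap f)
         Thom EG (unionE EK EH f) (unionL f a a') (unionL f b b') J I)
  /\
  (* (2) *)
  (forall e : k' = l,
     (forall (j : {ffun 'I_l' -> VG}) (i : {ffun 'I_k -> VG}),
        compop (Thom EG EH (castT e a') b') (Thom EG EK a b) j i
        = \sum_(f : {set VK * VH} | overlap f && [forall x, (b x, castT e a' x) \in f])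
            Thom EG (unionE EK EH f) [ffun x => fK f (a x)] [ffun x => fH f (b' x)] j i)
     /\
     (kerT b != kerT (castT e a') ->
        forall (j : {ffun 'I_l' -> VG}) (i : {ffun 'I_k -> VG}),
          compop (Thom EG EH (castT e a') b') (Thom EG EK a b) j i = 0))
  /\
  (* (3) *)
  (forall (i : {ffun 'I_k -> VG}) (j : {ffun 'I_l -> VG}),
     adjop (Thom EG EK a b) i j = Thom EG EK b a i j).
Proof.
split; [exact: Thom_tensor | split; [move=> e; split | exact: Thom_adj]].
- exact: Thom_comp.
- by move=> ker_neq j i; apply: Thom_comp_ker.
Qed.
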